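(* The GreedyEJR-M rule is well-defined, always terminates, and for every instance returns a bundle $R'$ with $s(R')\le\alpha$ that satisfies EJR-M (and therefore EJR-1). In particular, an EJR-M allocation exists in every instance.
   Context: Model: There is a set of agents $N=\{1,\dots,n\}$. The resource $R$ consists of a cake $C=[0,c]$ for a real $c\ge 0$ and a set of indivisible goods $G=\{g_1,\dots,g_m\}$ for an integer $m\ge 0$, with $\max(c,m)>0$. A piece of cake is a union of finitely many disjoint closed subintervals of $C$; its length $\ell(\cdot)$ is the sum of the lengths of its intervals. A bundle $R'=(C',G')$ consists of a piece of cake $C'\subseteq C$ and a set $G'\subseteq G$; its size is $s(R')=\ell(C')+|G'|$. Each agent $i$ approves a bundle $R_i=(C_i,G_i)$, and her utility for a bundle $R'$ is $u_i(R')=\ell(C_i\cap C')+|G_i\cap G'|$. A parameter $\alpha\in(0,c+m]$ is given; an allocation is a bundle $A$ with $s(A)\le\alpha$. For a real $t\ge 0$, a group $N^*\subseteq N$ is $t$-cohesive if $|N^*|\ge t\cdot n/\alpha$ and $s(\bigcap_{i\in N^*}R_i)\ge t$. EJR-M: an allocation $A$ satisfies EJR-M if for every real $t>0$ and every $t$-cohesive group $N^*$ for which there exists a bundle $R^*\subseteq R$ with $s(R^* )=t$ and $R^*\subseteq R_i$ for all $i\in N^*$, there is $j\in N^*$ with $u_j(A)\ge t$. EJR-1: for every real $t>0$ and every $t$-cohesive $N^*$, some $j\in N^*$ has $u_j(A)>t-1$. GreedyEJR-M rule: Step 1: set $N'=N$, $R'=\emptyset$. Step 2: let $t^*$ be the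 largest nonnegative real for which there exist a nonempty $N^*\subseteq N'$ and a bundle $R^*\subseteq R$ such that $N^*$ is $t^*$-cohesive, $R^*\subseteq R_i$ for all $i\in N^*$, and $s(R^* )=t^*$; take any such pair $(N^*,R^* )$, remove $N^*$ from $N'$, and add to $R'$ the part of $R^*$ not already in $R'$. Step 3: if $N'=\emptyset$ return $R'$; otherwise go to Step 2. *)

From HB Require Import structures.
From mathcomp Require Import all_boot all_order all_algebra.
From mathcomp Require Import all_classical all_reals all_analysis.
Set Implicit Arguments. Unset Strict Implicit. Unset Printing Implicit Defensive.
Import Order.TTheory GRing.Theory Num.Theory.
Local Open Scope classical_set_scope.
Local Open Scope ring_scope.

Section Model.
Variable R : realType.
(* n agents 'I_n, m goods 'I_m, cake [0,c] *)
Variables (n m : nat) (c alpha : R).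

Definition cake : set R := [set x | 0 <= x <= c].

Definition is_piece (X : set R) : Prop :=
  exists s : seq (R * R),
    (forall p, p \in s -> 0 <= p.1 /\ p.1 <= p.2 /\ p.2 <= c) /\
    (forall i j, (i < j < size s)%N ->
       [set x | (nth (0,0) s i).1 <= x <= (nth (0,0) s i).2] `&`
       [set x | (nth (0,0) s j).1 <= x <= (nth (0,0) s j).2] = set0) /\
    X = [set x | exists2 p, p \in s & p.1 <= x <= p.2].

(* Length of a piece of cake: its Lebesgue measure (finite for pieces). *)
Definition len (X : set R) : R := fine (@lebesgue_measure R X).

Definition bundle := (set R * {set 'I_m})%type.

Definition is_bundle (B : bundle) : Prop := is_piece B.1.

Definition bsize (B : bundle) : R := len B.1 + (#|B.2|)%:R.

Definition bsub (B B' : bundle) : Prop := B.1 `<=` B'.1 /\ B.2 \subset B'.2.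

Definition bunion (B B' : bundle) : bundle := (B.1 `|` B'.1, B.2 :|: B'.2).

Variable A : 'I_n -> bundle. (* approved bundles R_i = (C_i, G_i) *)

Definition util (i : 'I_n) (B : bundle) : R :=
  len ((A i).1 `&` B.1) + (#|(A i).2 :&: B.2|)%:R.

Definition common (S : {set 'I_n}) : bundle :=
  (cake `&` [set x | forall i, i \in S -> (A i).1 x],
   [set g : 'I_m | [forall i in S, g \in (A i).2]]%SET).

Definition cohesive (t : R) (S : {set 'I_n}) : Prop :=
  t * n%:R / alpha <= (#|S|)%:R /\ t <= bsize (common S).

Definition allocation (B : bundle) : Prop := is_bundle B /\ bsize B <= alpha.

Definition witness (t : R) (S : {set 'I_n}) (B : bundle) : Prop :=
  is_bundle B /\ (forall i, i \in S -> bsub B (A i)) /\ bsize B = t.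

Definition EJR_M (W : bundle) : Prop :=
  forall (t : R) (S : {set 'I_n}), 0 < t -> cohesive t S ->
    (exists B, witness t S B) ->
    exists2 j, j \in S & t <= util j W.

Definition EJR_1 (W : bundle) : Prop :=
  forall (t : R) (S : {set 'I_n}), 0 < t -> cohesive t S ->
    exists2 j, j \in S & t - 1 < util j W.

Definition feasible (N' : {set 'I_n}) (t : R) (S : {set 'I_n}) (B : bundle)
  : Prop :=
  0 <= t /\ S \subset N' /\ S != finset.set0 /\ cohesive t S /\ witness t S B.

(* states of the rule: (remaining agents N', current bundle R') *)
Definition state := ({set 'I_n} * bundle)%type.

Definition greedy_step (st st' : state) : Prop :=
  exists t S B,
    feasible st.1 t S B /\
    (forall t' S' B', feasible st.1 t' S' B' -> t' <= t) /\
    st' = (st.1 :\: S, bunion st.2 B).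

Definition init_state : state := (finset.setT, (set0, finset.set0)).

Inductive steps : nat -> state -> Prop :=
| steps0 : steps 0 init_state
| stepsS k st st' : steps k st -> greedy_step st st' -> steps k.+1 st'.

End Model.

From HB Require Import structures.
From mathcomp Require Import all_boot all_order all_algebra.
From mathcomp Require Import all_classical all_reals all_analysis.
From mathcomp Require Import lra zify.
Import Order.TTheory GRing.Theory Num.Theory.
Local Open Scope classical_set_scope.
Local Open Scope ring_scope.

(* Run GreedyEJR-M keeping track of the remaining agents N' and of
   the bundle R' built so far.  Two facts are invariant: s(R') is at most the
   quota |N \ N'| * alpha / n of the agents already removed, and every
   t-cohesive group owning a common bundle of size t that is not contained in
   N' has a member with utility at least t for R'.  Removing a t*-cohesive group
   S adds at most t* <= |S| * alpha / n to s(R'); a group S' that was inside N'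
   but meets S was a candidate, so t' <= t* by maximality of t*, and its members
   in S get utility t* from the bundle just added.  Once N' is empty the
   invariant gives s(R') <= alpha and EJR-M.  Step 2 is well defined because the
   sizes of the common sub-bundles of a group are exactly l + k with l up to the
   length of the common cake and k up to the number of common goods, so below
   any bound the largest one is attained; this needs pieces of cake to be closed
   under union and intersection and to contain sub-pieces of every smaller
   length. *)

Section Segments.
Context {R : realType} {c : R}.
Implicit Types (p q : R * R) (s : seq (R * R)) (X Y : set R).

Definition seg p : set R := [set x | p.1 <= x <= p.2].

Definition cover s : set R := [set x | exists2 p, p \in s & p.1 <= x <= p.2].

Definition seg_in p := [&& 0 <= p.1, p.1 <= p.2 & p.2 <= c].

Definition seg_apart p q := (p.2 < q.1) || (q.2 < p.1).

Lemma seg_apartC p q : seg_apart p q = seg_apart q p.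
Proof. by rewrite /seg_apart orbC. Qed.

Lemma seg_apartP {p q} : p.1 <= p.2 -> q.1 <= q.2 ->
  reflect (seg p `&` seg q = set0) (seg_apart p q).
Proof.
move=> hp hq; apply: (iffP idP) => [pq|pq0].
  by apply/seteqP; split => x // [/andP[? ?] /andP[? ?]]; case/orP: pq; lra.
apply/negPn/negP; rewrite negb_or -!leNgt => /andP[? ?].
have [pq|qp] := leP p.1 q.1; [have : (seg p `&` seg q) q.1|have : (seg p `&` seg q) p.1];
  by [rewrite pq0|split; apply/andP; split; lra].
Qed.

Lemma seg_in_sub p : seg_in p -> seg p `<=` cake c.
Proof. by case/and3P => *; move=> x /andP[? ?]; apply/andP; split; lra. Qed.

Lemma seg_inP p : p.1 <= p.2 -> seg p `<=` cake c -> seg_in p.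
Proof.
move=> hp sub; have /andP[p0 _] : cake c p.1 by apply: sub; rewrite /seg /= lexx hp.
have /andP[_ pc] : cake c p.2 by apply: sub; rewrite /seg /= lexx hp.
by rewrite /seg_in p0 hp pc.
Qed.

Lemma cover_nil : cover [::] = set0.
Proof. by apply/seteqP; split => x // [p]. Qed.

Lemma cover_cat s1 s2 : cover (s1 ++ s2) = cover s1 `|` cover s2.
Proof.
apply/seteqP; split => x /=.
- by case=> p; rewrite mem_cat => /orP[] ps hp; [left|right]; exists p.
- by case=> -[p ps hp]; exists p => //; rewrite mem_cat ps ?orbT.
Qed.

Lemma cover1 p : cover [:: p] = seg p.
Proof.
apply/seteqP; split => x /=; first by case=> q; rewrite inE => /eqP->.
by exists p; rewrite ?mem_head.
Qed.

Lemma cover_cons p s : cover (p :: s) = seg p `|` cover s.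
Proof. by rewrite -cat1s cover_cat cover1. Qed.

Lemma cover_filter (a : pred (R * R)) s :
  cover [seq q <- s | a q] `|` cover [seq q <- s | ~~ a q] = cover s.
Proof.
apply/seteqP; split => x /=.
- by case=> -[q]; rewrite mem_filter => /andP[_ qs] hq; exists q.
- case=> q qs hq; case aq: (a q); [left|right]; exists q => //;
  by rewrite mem_filter ?aq qs.
Qed.

Lemma cover_sub s : all seg_in s -> cover s `<=` cake c.
Proof. by move=> /allP hs x [p /hs /seg_in_sub]; apply. Qed.

Lemma pairwise_apart {s p q} : pairwise seg_apart s ->
  p \in s -> q \in s -> p != q -> seg_apart p q.
Proof.
elim: s => //= r s IH /andP[/allP rs ps]; rewrite !inE.
case/orP=> [/eqP->|pr] /orP[/eqP->|qr] pq.
- by rewrite eqxx in pq.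
- exact: rs.
- by rewrite seg_apartC; apply: rs.
- exact: IH.
Qed.

Lemma seg_join {p q} : p.1 <= p.2 -> q.1 <= q.2 -> ~~ seg_apart p q ->
  seg (Num.min p.1 q.1, Num.max p.2 q.2) = seg p `|` seg q.
Proof.
move=> hp hq; rewrite negb_or -!leNgt => /andP[? ?].
apply/seteqP; split => x; rewrite /seg /= ge_min le_max.
- by case: (lerP p.1 x); case: (lerP q.1 x); case: (lerP x p.2); case: (lerP x q.2);
    rewrite /= ?orbT ?orbF ?andbT ?andbF //=; lra.
- by case=> /andP[? ?]; apply/andP; split; apply/orP; [left|left|right|right].
Qed.

Definition seg_hull p s : R * R :=
  foldr (fun q h => (Num.min h.1 q.1, Num.max h.2 q.2)) p s.

Lemma seg_hull_spec p s : p.1 <= p.2 ->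
  (forall q, q \in s -> q.1 <= q.2 /\ ~~ seg_apart p q) ->
  (seg_hull p s).1 <= (seg_hull p s).2 /\ seg (seg_hull p s) = seg p `|` cover s.
Proof.
move=> hp; elim: s => [|q s IH] hs; first by rewrite cover_nil setU0.
have [hq pq] := hs q (mem_head _ _).
have [hh eh] := IH (fun r rs => hs r (mem_behead (s := q :: s) rs)).
have hq' : ~~ seg_apart (seg_hull p s) q.
  apply: contra pq => /(seg_apartP hh hq) hq0; apply/seg_apartP => //.
  apply/disjoints_subset => x px qx.
  suff : (seg (seg_hull p s) `&` seg q) x by rewrite hq0.
  by split => //; rewrite eh; left.
have -> : seg_hull p (q :: s) =
  (Num.min (seg_hull p s).1 q.1, Num.max (seg_hull p s).2 q.2) by [].
split; first by rewrite /= ge_min !le_max hh.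
by rewrite (seg_join hh hq hq') eh cover_cons -setUA [cover s `|` _]setUC.
Qed.

Definition seg_insert p s : seq (R * R) :=
  [seq q <- s | seg_apart p q] ++
  [:: seg_hull p [seq q <- s | ~~ seg_apart p q]].

Lemma seg_insert_spec {p s} : seg_in p -> all seg_in s -> pairwise seg_apart s ->
  [/\ all seg_in (seg_insert p s), pairwise seg_apart (seg_insert p s) &
      cover (seg_insert p s) = seg p `|` cover s].
Proof.
move=> vp vs ps; rewrite /seg_insert; set G := [seq q <- s | ~~ seg_apart p q].
have nonempty q : seg_in q -> q.1 <= q.2 by case/and3P.
have vfilter (a : pred (R * R)) : all seg_in [seq q <- s | a q].
  by apply/allP => q; rewrite mem_filter => /andP[_ /(allP vs)].
have [hh eh] : (seg_hull p G).1 <= (seg_hull p G).2 /\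
               seg (seg_hull p G) = seg p `|` cover G.
  apply: seg_hull_spec; first exact: nonempty.
  by move=> q; rewrite mem_filter => /andP[pq /(allP vs) /nonempty].
split.
- rewrite all_cat vfilter /= andbT; apply: seg_inP => //.
  by rewrite eh subUset; split; [exact: seg_in_sub|exact: cover_sub (vfilter _)].
- rewrite pairwise_cat pairwise_filter //= andbT allrel1r.
  apply/allP => q; rewrite mem_filter => /andP[pq qs].
  have hq := nonempty q (allP vs q qs).
  apply/(seg_apartP hq hh); rewrite eh setIUr.
  have /(seg_apartP hq (nonempty p vp)) -> : seg_apart q p by rewrite seg_apartC.
  rewrite set0U; apply/disjoints_subset => x qx [r].
  rewrite mem_filter => /andP[pr rs] rx.
  have qr : q != r by apply: contraNneq pr => <-.
  have hr := nonempty r (allP vs r rs).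
  have /(seg_apartP hq hr)/seteqP[/(_ x) qr0 _] := pairwise_apart ps qs rs qr.
  by apply: qr0; split.
- by rewrite cover_cat cover1 eh setUCA cover_filter.
Qed.

(* [is_piece] asks for pairwise disjoint segments: [seg_insert] merges a new
   segment with all the segments it meets into their hull. *)
Definition normalize s : seq (R * R) := foldr seg_insert [::] s.

Lemma normalize_spec s : all seg_in s ->
  [/\ all seg_in (normalize s), pairwise seg_apart (normalize s) &
      cover (normalize s) = cover s].
Proof.
elim: s => [|p s IH] /=; first by rewrite cover_nil.
case/andP=> vp /IH[v ps e].
have [v' ps' e'] := seg_insert_spec vp v ps.
by split => //; rewrite e' e cover_cons.
Qed.

Definition seg_meets s1 s2 : seq (R * R) :=
  [seq r <- [seq (Num.max p.1 q.1, Num.min p.2 q.2) | p <- s1, q <- s2] | r.1 <= r.2].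

Lemma seg_meets_spec {s1 s2} : all seg_in s1 -> all seg_in s2 ->
  all seg_in (seg_meets s1 s2) /\ cover (seg_meets s1 s2) = cover s1 `&` cover s2.
Proof.
move=> v1 v2; split.
  apply/allP => r; rewrite mem_filter => /andP[r12 /allpairsP[[p q] [ps qs er]]].
  subst r; case/and3P: (allP v1 p ps) => p0 _ _; case/and3P: (allP v2 q qs) => _ _ qc.
  by apply/and3P; split; rewrite //= ?le_max ?ge_min ?p0 ?qc ?orbT.
apply/seteqP; split => x /=.
- case=> r; rewrite mem_filter => /andP[_ /allpairsP[[p q] [ps qs ->]]] /=.
  rewrite ge_max le_min => /andP[/andP[? ?] /andP[? ?]].
  by split; [exists p => //; apply/andP|exists q => //; apply/andP].
- case=> -[p ps /andP[? ?]] [q qs /andP[? ?]].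
  exists (Num.max p.1 q.1, Num.min p.2 q.2); last first.
    by rewrite /= ge_max le_min; apply/andP; split; apply/andP.
  rewrite mem_filter /= ge_max !le_min; apply/andP; split.
    by apply/andP; split; apply/andP; split; lra.
  by apply/allpairsP; exists (p, q).
Qed.

Lemma is_piece_cover {s} : all seg_in s -> is_piece c (cover s).
Proof.
case/normalize_spec => v ps e; exists (normalize s); split; [|split; [|by rewrite -e]].
  by move=> p /(allP v)/and3P[? ? ?].
move=> i j /andP[ij js]; have is' := ltn_trans ij js.
have nth_nonempty k : (k < size (normalize s))%N ->
    (nth (0, 0) (normalize s) k).1 <= (nth (0, 0) (normalize s) k).2.
  by move=> ks; case/and3P: (allP v _ (mem_nth (0, 0) ks)).
exact/(seg_apartP (nth_nonempty i is') (nth_nonempty j js))/(pairwiseP (0, 0) ps).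
Qed.

Lemma is_pieceP X : is_piece c X ->
  exists s, [/\ all seg_in s, pairwise seg_apart s & X = cover s].
Proof.
case=> s [hv [hd ->]]; exists s; split => //.
  by apply/allP => p /hv[? [? ?]]; apply/and3P.
apply/(pairwiseP (0, 0)) => i j is' js ij.
have [_ [? _]] := hv _ (mem_nth (0, 0) is'); have [_ [? _]] := hv _ (mem_nth (0, 0) js).
by apply/seg_apartP => //; apply: hd; rewrite ij.
Qed.

Lemma is_piece_seg {p} : seg_in p -> is_piece c (seg p).
Proof. by move=> vp; rewrite -cover1; apply: is_piece_cover; rewrite /= vp. Qed.

Lemma seg_cover_disjoint {p s} : p.1 <= p.2 -> all seg_in s -> all (seg_apart p) s ->
  seg p `&` cover s = set0.
Proof.
move=> hp /allP vs /allP ps; apply/disjoints_subset => x px [q qs qx].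
have [_ hq _] := and3P (vs q qs).
have /(seg_apartP hp hq)/seteqP[/(_ x) pq0 _] := ps q qs.
by apply: pq0; split.
Qed.

Lemma is_piece_sub {X} : is_piece c X -> X `<=` cake c.
Proof. by case/is_pieceP => s [v _ ->]; exact: cover_sub. Qed.

Lemma is_piece0 : is_piece c set0.
Proof. by rewrite -cover_nil; exact: is_piece_cover. Qed.

Lemma is_piece_cake : 0 <= c -> is_piece c (cake c).
Proof.
move=> c0; rewrite (_ : cake c = cover [:: (0, c)]); last by rewrite cover1.
by apply: is_piece_cover; rewrite /= /seg_in /= lexx c0 lexx.
Qed.

Lemma is_pieceU {X Y} : is_piece c X -> is_piece c Y -> is_piece c (X `|` Y).
Proof.
case/is_pieceP => s1 [v1 _ ->]; case/is_pieceP => s2 [v2 _ ->].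
by rewrite -cover_cat; apply: is_piece_cover; rewrite all_cat v1 v2.
Qed.

Lemma is_pieceI {X Y} : is_piece c X -> is_piece c Y -> is_piece c (X `&` Y).
Proof.
case/is_pieceP => s1 [v1 _ ->]; case/is_pieceP => s2 [v2 _ ->].
by have [v <-] := seg_meets_spec v1 v2; exact: is_piece_cover.
Qed.

Lemma is_piece_bigcap (T : eqType) (l : seq T) (F : T -> set R) : 0 <= c ->
  (forall i, is_piece c (F i)) ->
  is_piece c (cake c `&` [set x | forall i, i \in l -> F i x]).
Proof.
move=> c0 hF; elim: l => [|a l IH].
  rewrite (_ : [set x | _] = setT) ?setIT; first exact: is_piece_cake.
  by apply/seteqP; split => // x _ i.
rewrite (_ : _ `&` _ = F a `&` (cake c `&` [set x | forall i, i \in l -> F i x])).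
  exact: is_pieceI.
apply/seteqP; split => x /=.
- by case=> cx H; split; [|split=> // i il]; apply: H; rewrite inE ?eqxx ?il ?orbT.
- by case=> Fa [cx H]; split=> // i; rewrite inE => /orP[/eqP->|/H].
Qed.

End Segments.

Arguments seg_in {R} c p.

Section Length.
Context {R : realType} {c : R}.
Implicit Types (p : R * R) (s : seq (R * R)) (X Y : set R).

Lemma seg_itv p : seg p = [set` `[p.1, p.2]].
Proof. by apply/seteqP; split => x /=; rewrite in_itv. Qed.

Lemma measurable_cover s : measurable (cover s).
Proof.
elim: s => [|p s IH]; first by rewrite cover_nil.
by rewrite cover_cons seg_itv; exact: measurableU.
Qed.

Lemma is_piece_measurable {X} : is_piece c X -> measurable X.
Proof. by case/is_pieceP => s [_ _ ->]; exact: measurable_cover. Qed.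

Lemma lebesgue_piece {X} : is_piece c X -> lebesgue_measure X = (len X)%:E.
Proof.
move=> pX; rewrite /len fineK // ge0_fin_numE ?measure_ge0 //.
apply: (le_lt_trans (y := lebesgue_measure (cake c))).
  apply: le_measure; rewrite ?inE; [exact: is_piece_measurable| |exact: is_piece_sub].
  by rewrite (_ : cake c = seg (0, c)) // seg_itv.
rewrite (_ : cake c = seg (0, c)) // seg_itv lebesgue_measure_itv /=.
by case: ifP; rewrite ?lt0y // -EFinD ltry.
Qed.

Lemma len_ge0 X : 0 <= len X.
Proof. by rewrite /len fine_ge0 // measure_ge0. Qed.

Lemma len_seg {p} : p.1 <= p.2 -> len (seg p) = p.2 - p.1.
Proof.
move=> hp; rewrite /len seg_itv lebesgue_measure_itv /= lte_fin.
case: ltP => h; first by rewrite -EFinD.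
have -> : p.2 = p.1 by apply/le_anti; rewrite h hp.
by rewrite subrr.
Qed.

Lemma len_set0 : len (@set0 R) = 0.
Proof. by rewrite /len measure0. Qed.

Lemma le_len {X Y} : is_piece c X -> is_piece c Y -> X `<=` Y -> len X <= len Y.
Proof.
move=> pX pY XY; rewrite -lee_fin -!lebesgue_piece //.
by apply: le_measure; rewrite ?inE //; exact: is_piece_measurable.
Qed.

Lemma len_setU_le {X Y} : is_piece c X -> is_piece c Y -> len (X `|` Y) <= len X + len Y.
Proof.
move=> pX pY; rewrite -lee_fin EFinD -!lebesgue_piece //; last exact: is_pieceU.
by apply: measureU2; exact: is_piece_measurable.
Qed.

Lemma len_setU {X Y} : is_piece c X -> is_piece c Y -> X `&` Y = set0 ->
  len (X `|` Y) = len X + len Y.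
Proof.
move=> pX pY XY0; apply: EFin_inj.
rewrite EFinD -!lebesgue_piece //; last exact: is_pieceU.
by apply: measureU => //; exact: is_piece_measurable.
Qed.

Lemma is_piece_sub_len {X l} : is_piece c X -> 0 <= l <= len X ->
  exists Y, [/\ is_piece c Y, Y `<=` X & len Y = l].
Proof.
case/is_pieceP => s [+ + ->]; elim: s l => [|p s IH] l.
  move=> _ _; rewrite cover_nil len_set0 => l00.
  by exists set0; rewrite -(le_anti l00) len_set0; split => //; exact: is_piece0.
move=> /= /andP[vp vs] /andP[ps pws].
have [p0 p1 p2] := and3P vp.
have pcover Z : Z `<=` cover s -> seg p `&` Z = set0.
  by move=> Zs; apply: subsetI_eq0 (seg_cover_disjoint p1 vs ps).
have [ppiece spiece] := (is_piece_seg vp, is_piece_cover vs).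
rewrite cover_cons len_setU ?pcover // len_seg //.
move=> /andP[l0 hl]; have [lp|pl] := lerP l (p.2 - p.1).
  have vq : seg_in c (p.1, p.1 + l) by apply/and3P; split => /=; lra.
  exists (seg (p.1, p.1 + l)); split; first exact: is_piece_seg.
    by move=> x; rewrite /seg /= => /andP[? ?]; left; apply/andP; split; lra.
  by rewrite len_seg /=; lra.
have [|Y [pY Ys eY]] := IH (l - (p.2 - p.1)) vs pws; first by apply/andP; split; lra.
exists (seg p `|` Y); split; first exact: is_pieceU.
  by apply: setUS.
by rewrite len_setU ?pcover // len_seg // eY; lra.
Qed.

End Length.

Section Bundles.
Context {R : realType} {n m : nat} {c : R} {A : 'I_n -> bundle R m}.
Hypotheses (hc : 0 <= c) (hA : forall i, is_bundle c (A i)).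
Implicit Types (S : {set 'I_n}) (W B : bundle R m).

Lemma common_piece S : is_piece c (common c A S).1.
Proof.
rewrite /common /= (_ : [set x | _] = [set x | forall i, i \in enum S -> (A i).1 x]).
  exact: is_piece_bigcap.
by apply/seteqP; split => x /= H i; rewrite ?mem_enum => iS; apply: H; rewrite ?mem_enum.
Qed.

Lemma bsub_commonP B S : B.1 `<=` cake c ->
  bsub B (common c A S) <-> forall i, i \in S -> bsub B (A i).
Proof.
move=> Bc; split => [[B1 B2] i iS|HB]; last split.
- split; first by move=> x /B1[_]; apply.
  apply: fintype.subset_trans B2 _; apply/fintype.subsetP => g.
  by rewrite inE => /forallP/(_ i)/implyP; apply.
- by move=> x Bx; split=> [|i /HB[/(_ x Bx)]]; first exact: Bc.
- apply/fintype.subsetP => g gB; rewrite inE; apply/forallP => i; apply/implyP => iS.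
  by have [_ /fintype.subsetP] := HB i iS; apply.
Qed.

Lemma witness_common {t S B} : witness c A t S B -> bsub B (common c A S).
Proof. by case=> pB [HB _]; apply/bsub_commonP => //; exact: is_piece_sub. Qed.

Lemma witness_of_size S l k : 0 <= l <= len (common c A S).1 ->
  (k <= #|(common c A S).2|)%N -> exists B, witness c A (l + k%:R) S B.
Proof.
move=> hl /card_geqP[g [ug sg gG]].
have [Y [pY YP <-]] := is_piece_sub_len (common_piece S) hl.
have YGcommon : bsub (Y, [set x in g]%SET) (common c A S).
  by split => //; apply/fintype.subsetP => x; rewrite inE => /gG.
exists (Y, [set x in g]%SET); split => //; split.
  by apply/bsub_commonP => //; exact: is_piece_sub.
by rewrite /bsize cardsE (card_uniqP ug) sg.
Qed.

(* The optimum is [min T (k + L)] with [k = minn #|G| (truncn T)]: at most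
   [truncn T] whole goods fit below [T]. *)
Lemma max_witness S T : 0 <= T -> exists t B,
  [/\ witness c A t S B, t <= T,
      (forall t' B', witness c A t' S B' -> t' <= T -> t' <= t) &
      (T <= bsize (common c A S) -> T - 1 < t)].
Proof.
move=> T0; set L := len (common c A S).1; set G := (common c A S).2.
have L0 : 0 <= L := len_ge0 _.
set k := minn #|G| (Num.truncn T).
have kT : k%:R <= T.
  by apply: le_trans (_ : (Num.truncn T)%:R <= T); rewrite ?truncn_le // ler_nat geq_minr.
set t := Num.min T (k%:R + L).
have kt : k%:R <= t by rewrite le_min kT lerDl L0.
have tkL : t <= k%:R + L by rewrite ge_min lexx orbT.
have [|B wB] := witness_of_size S (t - k%:R) k _ (geq_minl _ _).
  by rewrite -/L; apply/andP; split; lra.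
rewrite subrK in wB; exists t, B; split => //; first by rewrite ge_min lexx.
- move=> t' B' wB' t'T; have [B1 B2] := witness_common wB'.
  case: wB' t'T => pB' [_ <-] t'T.
  have lB : len B'.1 <= L := le_len pB' (common_piece S) B1.
  have kB : (#|B'.2| <= k)%N.
    rewrite leq_min (subset_leq_card B2) truncn_ge_nat //.
    by apply: le_trans t'T; rewrite /bsize lerDr len_ge0.
  by rewrite le_min t'T /bsize addrC lerD // ler_nat.
- move=> TG; rewrite lt_min ltrBlDr ltrDl ltr01 /=.
  rewrite /k; case: (leqP #|G| (Num.truncn T)) => hG.
    by move: TG; rewrite /bsize -/L -/G; lra.
  by have := truncnS_gt T; rewrite -natr1; lra.
Qed.

Lemma witness0 S : witness c A 0 S (set0, finset.set0).
Proof.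
split; first exact: is_piece0.
split=> [i _|]; last by rewrite /bsize len_set0 cards0 addr0.
by split=> [x []|]; exact: finset.sub0set.
Qed.

Lemma le_bsize B B' : is_piece c B.1 -> is_piece c B'.1 -> bsub B B' ->
  bsize B <= bsize B'.
Proof.
by move=> pB pB' [B1 B2]; rewrite lerD ?ler_nat ?(le_len pB pB') ?subset_leq_card.
Qed.

Lemma witness_le_bsize {t S B} : witness c A t S B -> t <= bsize (common c A S).
Proof.
move=> wB; have [pB [_ <-]] := wB.
exact: le_bsize pB (common_piece S) (witness_common wB).
Qed.

Lemma util_ge0 j W : 0 <= util A j W.
Proof. by rewrite /util addr_ge0 ?len_ge0. Qed.

Lemma util_witness {j t S B} : j \in S -> witness c A t S B -> util A j B = t.
Proof.
move=> jS [_ [/(_ j jS)[B1 B2] <-]].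
by rewrite /util (setIidr B1) (finset.setIidPr B2).
Qed.

Lemma le_util j {W W'} : bsub W W' -> is_piece c W.1 -> is_piece c W'.1 ->
  util A j W <= util A j W'.
Proof.
move=> [W1 W2] pW pW'; rewrite /util lerD ?ler_nat //.
  by apply: le_len; [exact: is_pieceI (hA j) pW|exact: is_pieceI (hA j) pW'|exact: setIS].
by apply: subset_leq_card; exact: finset.setIS.
Qed.

Lemma bsub_bunionl W B : bsub W (bunion W B).
Proof. by split; [exact: subsetUl|exact: finset.subsetUl]. Qed.

Lemma bsub_bunionr W B : bsub B (bunion W B).
Proof. by split; [exact: subsetUr|exact: finset.subsetUr]. Qed.

Lemma bsize_bunion {W B} : is_piece c W.1 -> is_piece c B.1 ->
  bsize (bunion W B) <= bsize W + bsize B.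
Proof.
move=> pW pB; rewrite /bsize /bunion /= addrACA lerD //; first exact: (len_setU_le pW pB).
by rewrite -natrD ler_nat; exact: (leq_card_setU W.2 B.2).1.
Qed.

End Bundles.

Section Greedy.
Context {R : realType} {n m : nat} {c alpha : R} {A : 'I_n -> bundle R m}.
Hypotheses (hn : (0 < n)%N) (hc : 0 <= c) (halpha : 0 < alpha)
  (hA : forall i, is_bundle c (A i)).
Implicit Types (S N : {set 'I_n}) (W B : bundle R m) (st : state R n m).

Definition quota S : R := #|S|%:R * alpha / n%:R.

Lemma quota_ge0 S : 0 <= quota S.
Proof. by rewrite /quota divr_ge0 ?mulr_ge0 ?ler0n ?(ltW halpha). Qed.

Lemma quota_setT : quota [set: 'I_n] = alpha.
Proof. by rewrite /quota cardsT card_ord mulrAC divff ?mul1r // pnatr_eq0 -lt0n. Qed.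

Lemma quota_setCD N S : S \subset N -> quota (~: (N :\: S)) = quota (~: N) + quota S.
Proof.
move=> SN; rewrite /quota -!mulrDl -natrD; congr (_%:R * _ * _).
have := cardsC (N :\: S); have := cardsC N; have := subset_leq_card SN.
by rewrite cardsD (finset.setIidPr SN) card_ord; lia.
Qed.

Lemma cohesive_quota t S : (t * n%:R / alpha <= #|S|%:R) = (t <= quota S).
Proof. by rewrite ler_pdivrMr // /quota ler_pdivlMr ?ltr0n // mulrC. Qed.

Lemma cohesive_neq0 {t S} : 0 < t -> cohesive c alpha A t S -> S != finset.set0.
Proof.
move=> t0 [+ _]; rewrite -card_gt0 -(ltr0n R); apply: lt_le_trans.
by rewrite !divr_gt0 ?mulr_gt0 ?ltr0n.
Qed.

(* For [1 <= t], a [t]-cohesive group has a common bundle of some size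
   [t' \in (t - 1, t]], and it is [t']-cohesive. *)
Lemma EJR_M_EJR_1 W : EJR_M c alpha A W -> EJR_1 c alpha A W.
Proof.
move=> hM t S t0 coh; have /set0Pn[j jS] := cohesive_neq0 t0 coh.
have [t1|t1] := ltrP t 1.
  by exists j => //; apply: lt_le_trans (util_ge0 _ _); lra.
have [tq tG] := coh; rewrite cohesive_quota in tq.
have [t' [B [wB t't _ /(_ tG) tt']]] := max_witness hc hA S t (ltW t0).
have coh' : cohesive c alpha A t' S.
  by split; [rewrite cohesive_quota (le_trans t't)|exact: (witness_le_bsize hc hA wB)].
have [|j' j'S hj'] := hM t' S _ coh' (ex_intro _ B wB); first lra.
by exists j' => //; lra.
Qed.

Definition EJR_removed st : Prop :=
  forall t S, 0 < t -> cohesive c alpha A t S -> (exists B, witness c A t S B) ->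
    ~~ (S \subset st.1) -> exists2 j, j \in S & t <= util A j st.2.

Definition greedy_inv st : Prop :=
  [/\ is_piece c st.2.1, bsize st.2 <= quota (~: st.1) & EJR_removed st].

Lemma greedy_inv_init : greedy_inv (init_state R n m).
Proof.
split => /=; [exact: is_piece0|by rewrite /bsize len_set0 cards0 addr0 quota_ge0|].
by move=> t S _ _ _; rewrite finset.subsetT.
Qed.

Lemma EJR_removed_step {N W t S B} : is_piece c W.1 -> EJR_removed (N, W) ->
  feasible c alpha A N t S B ->
  (forall t' S' B', feasible c alpha A N t' S' B' -> t' <= t) ->
  EJR_removed (N :\: S, bunion W B).
Proof.
move=> pW hW [_ [SN [_ [_ wB]]]] tmax t' S' t'0 coh' [B' wB'] /= S'NS.
have pB : is_piece c B.1 by case: wB.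
have pWB : is_piece c (bunion W B).1 := is_pieceU pW pB.
have [S'N|S'N] := boolP (S' \subset N); last first.
  have [j jS' hj] := hW t' S' t'0 coh' (ex_intro _ B' wB') S'N.
  by exists j => //; apply: le_trans hj (le_util hA j (bsub_bunionl W B) pW pWB).
have [j jS' jNS] := fintype.subsetPn S'NS.
have jS : j \in S.
  by move: jNS; rewrite inE negb_and negbK (fintype.subsetP S'N j jS') orbF.
exists j => //; apply: le_trans (tmax t' S' B' _) _.
  by split; [exact: ltW|split=> //; split; [apply/set0Pn; exists j|]].
rewrite -(util_witness jS wB); exact: (le_util hA j (bsub_bunionr W B) pB pWB).
Qed.

Lemma greedy_inv_step st st' : greedy_inv st -> greedy_step c alpha A st st' ->
  greedy_inv st'.
Proof.
case: st => N W [pW hsize hW] [t [S [B [ft [tmax ->]]]]] /=.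
have [_ [SN [_ [[tq _] wB]]]] := ft; have [pB [_ eB]] := wB.
rewrite cohesive_quota in tq.
split => /=; first exact: is_pieceU.
  rewrite quota_setCD //; apply: le_trans (bsize_bunion pW pB) _.
  by rewrite eB lerD.
exact: (EJR_removed_step pW hW ft tmax).
Qed.

Lemma greedy_inv_steps k st : steps c alpha A k st -> greedy_inv st.
Proof.
elim=> [|{}k {}st st' _ IH]; first exact: greedy_inv_init.
exact: greedy_inv_step.
Qed.

Lemma greedy_step_card {st st'} : greedy_step c alpha A st st' ->
  (#|st'.1| < #|st.1|)%N.
Proof.
case=> t [S [B [[_ [SN [Sne _]]] [_ ->]]]] /=.
have := subset_leq_card SN; rewrite cardsD (finset.setIidPr SN) -card_gt0 in Sne *.
by move=> le; rewrite ltn_subrL Sne (leq_trans Sne le).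
Qed.

Lemma steps_card k st : steps c alpha A k st -> (k + #|st.1| <= n)%N.
Proof.
elim=> [|{}k {}st st' _ IH /greedy_step_card]; first by rewrite /= cardsT card_ord.
by lia.
Qed.

Lemma greedy_step_exists {st} : st.1 != finset.set0 ->
  exists st', greedy_step c alpha A st st'.
Proof.
move=> /set0Pn[j jN].
have best S : exists t, [/\ exists B, witness c A t S B, t <= quota S &
    forall t' B', witness c A t' S B' -> t' <= quota S -> t' <= t].
  have [t [B [wB tq tmax _]]] := max_witness hc hA S (quota S) (quota_ge0 S).
  by exists t; split => //; exists B.
pose F S := sval (cid (best S)).
pose P := [pred S : {set 'I_n} | (S \subset st.1) && (S != finset.set0)].
have Pj : P [set j]%SET.
  by rewrite /P /= finset.sub1set jN; apply/set0Pn; exists j; rewrite inE.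
case: (arg_maxP F Pj) => S /andP[SN Sne] Smax.
have [[B wB] tq tmax] := svalP (cid (best S)).
exists (st.1 :\: S, bunion st.2 B), (F S), S, B; split; [|split => //].
- split; first exact: (tmax _ _ (witness0 S) (quota_ge0 S)).
  do 3 split => //; split; [by rewrite cohesive_quota|exact: (witness_le_bsize hc hA wB)].
- move=> t' S' B' [_ [S'N [S'ne [[coh' _] wB']]]].
  have [_ _ t'max] := svalP (cid (best S')).
  apply: le_trans (Smax S' _); last by rewrite /P /= S'N S'ne.
  by apply: t'max wB' _; rewrite -cohesive_quota.
Qed.

Lemma greedy_output {k W} : steps c alpha A k (finset.set0, W) ->
  allocation c alpha W /\ EJR_M c alpha A W.
Proof.
move/greedy_inv_steps => [pW hsize hW] /=.
rewrite finset.setC0 quota_setT in hsize; split => // t S t0 coh wS.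
by apply: hW => //=; rewrite finset.subset0; exact: cohesive_neq0 t0 coh.
Qed.

Lemma greedy_run {k st} : steps c alpha A k st ->
  exists k' W, steps c alpha A k' (finset.set0, W).
Proof.
move: {2}#|st.1|.+1 (ltnSn #|st.1|) => b; elim: b k st => // b IH k st lt hs.
have [e|ne] := eqVneq st.1 finset.set0.
  by exists k, st.2; rewrite -e -surjective_pairing.
have [st' g] := greedy_step_exists ne.
apply: (IH k.+1 st'); last exact: stepsS hs g.
by have := greedy_step_card g; lia.
Qed.

End Greedy.

Theorem mainTheorem5 (R : realType) (n m : nat) (c alpha : R)
    (A : 'I_n -> bundle R m)
    (hn : (0 < n)%N) (hc : 0 <= c) (hcm : 0 < Num.max c (m%:R))
    (halpha0 : 0 < alpha) (halpha1 : alpha <= c + m%:R)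
    (hA : forall i, is_bundle c (A i)) :
  (forall k st, steps c alpha A k st -> st.1 != finset.set0 ->
     exists st', greedy_step c alpha A st st') /\
  (forall k st, steps c alpha A k st -> (k <= n)%N) /\
  (forall k W, steps c alpha A k (finset.set0, W) ->
     allocation c alpha W /\ EJR_M c alpha A W /\ EJR_1 c alpha A W) /\
  (exists W, allocation c alpha W /\ EJR_M c alpha A W).
Proof.
split; [|split; [|split]].
- by move=> k st _; exact: greedy_step_exists.
- by move=> k st /steps_card; lia.
- move=> k W /(greedy_output hn hc halpha0 hA)[alloc ejrM].
  by split => //; split => //; exact: EJR_M_EJR_1.
- have [k [W run]] := greedy_run hn hc halpha0 hA (steps0 c alpha A).
  by exists W; exact: (greedy_output hn hc halpha0 hA run).
Qed.
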